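(* Let $n\ge 1$, let $\mathcal{C}$ be a set of conditions, let $\varnothing\notin\mathcal{C}$ denote the null condition, fix $c\in\mathcal{C}$, let $N=2^m$ with $m\ge 1$ an integer, and set $d=1/N$. Let $s:\mathbb{R}^n\times[0,1]\times(\mathcal{C}\cup\{\varnothing\})\times(0,1]\to\mathbb{R}^n$ be any function (the shortcut model), and for a real number $\omega$ define the guided output $$g^{\omega}(x,t,c,\delta)=\omega\, s(x,t,c,\delta)+(1-\omega)\, s(x,t,\varnothing,\delta).$$ Fix a guidance scale $w\in\mathbb{R}$ and points $y_0,y_1,\dots,y_N\in\mathbb{R}^n$, where $y_i$ is associated with time $i/N$. Assume the following ideal self-consistency conditions hold: for every $j\in\{0,1,\dots,m-1\}$ and every index $i\in\{0,\dots,N-1\}$ that is a multiple of $2^{j+1}$, $$s\!\left(y_i,\tfrac{i}{N},c,2^{j+1}d\right)=\tfrac12\Big[g^{w}\!\left(y_i,\tfrac{i}{N},c,2^{j}d\right)+g^{w}\!\left(y_{i+2^j},\tfrac{i+2^j}{N},c,2^{j}d\right)\Big],$$ $$s\!\left(y_i,\tfrac{i}{N},\varnothing,2^{j+1}d\right)=\tfrac12\Big[s\!\left(y_i,\tfrac{i}{N},\varnothing,2^{j}d\right)+s\!\left(y_{i+2^j},\tfrac{i+2^j}{N},\varnothing,2^{j}d\right)\Big].$$ Then the one-step output of size $Nd=1$ satisfies $$s(y_0,0,c,Nd)=\frac1N\sum_{i=0}^{N-1} g^{\,w^{\log_2 N}}\!\left(y_i,\tfrac{i}{N},c,d\right),$$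 i.e. it equals the average of the $N$ smallest-step guided outputs, but with the guidance scale compounded to $w^{\log_2 N}$.
   Context: This formalizes the ''accumulated guidance'' effect in shortcut models: a network $s(x,t,c,\delta)$ conditioned on a sample $x$, time $t$, condition $c$ (or null condition $\varnothing$) and step size $\delta$, trained with classifier-free guidance of fixed scale $w$ inside a self-consistency target (one step of size $2\delta$ equals the average of two consecutive guided steps of size $\delta$). The ''ideal'' assumptions above express that the self-consistency loss is exactly zero at the relevant points. In the paper the points are the trajectory $y_0=x_0$ (initial noise), $y_{i+1}=y_i+s(y_i,i/N,c,d)\,d$, but the identity holds for any fixed points satisfying the stated conditions. Note the guided output convention used here is $g^\omega=\omega s(\cdot,c,\cdot)+(1-\omega)s(\cdot,\varnothing,\cdot)$. *)

From HB Require Import structures.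
From mathcomp Require Import all_boot all_order all_algebra.
From mathcomp Require Import reals.
Set Implicit Arguments. Unset Strict Implicit. Unset Printing Implicit Defensive.
Import Order.TTheory GRing.Theory Num.Theory.
Local Open Scope ring_scope.

(* Conditions live in a type [Cond]; the extended condition set C ∪ {∅}
   is [option Cond], with [None] the null condition ∅ and [Some c] = c. *)

Definition guided (R : realType) (n : nat) (Cond : Type)
  (s : 'rV[R]_n -> R -> option Cond -> R -> 'rV[R]_n)
  (om : R) (x : 'rV[R]_n) (t : R) (c : Cond) (dl : R) : 'rV[R]_n :=
  om *: s x t (Some c) dl + (1 - om) *: s x t None dl.

(* Write [mix om a b] for [om a + (1 - om) b], so that the guided output at
   scale om is the mix of the conditional and unconditional outputs.  Mixing
   is associative in the scale: [mix om (mix w a b) b = mix (om w) a b].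
   Hence the two self-consistency conditions together say that, for EVERY
   scale om, the scale-om mix at step 2^(j+1) d is the average of the two
   scale-(om w) mixes at step 2^j d.  Unfolding this m times from om = 1
   expresses the one-step output as the average over all N = 2^m smallest
   steps of the mixes at scale w^m. *)

From HB Require Import structures.
From mathcomp Require Import all_boot all_order all_algebra.
From mathcomp Require Import reals.
From mathcomp Require Import ring.
Set Implicit Arguments. Unset Strict Implicit. Unset Printing Implicit Defensive.
Import Order.TTheory GRing.Theory Num.Theory.
Local Open Scope ring_scope.

Lemma leq_add_dvdn d i N : (d %| i)%N -> (d %| N)%N -> (i < N)%N -> (i + d <= N)%N.
Proof.
move=> /dvdnP[q ->] /dvdnP[r ->]; case: d => [|d]; first by rewrite !muln0.
by rewrite -[X in (_ + X)%N]mul1n -mulnDl leq_pmul2r // ltn_pmul2r // addn1.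
Qed.

Lemma big_nat_split_pow2 (V : nmodType) i j (F : nat -> V) :
  \sum_(i <= k < i + 2 ^ j.+1) F k
  = \sum_(i <= k < i + 2 ^ j) F k + \sum_(i + 2 ^ j <= k < i + 2 ^ j + 2 ^ j) F k.
Proof. by rewrite -big_cat_nat ?leq_addr // -addnA addnn -mul2n -expnS. Qed.

Section Mixtures.
Variables (R : numFieldType) (V : lmodType R).

Definition mix (om : R) (a b : V) : V := om *: a + (1 - om) *: b.

Lemma mix1 a b : mix 1 a b = a.
Proof. by rewrite /mix subrr scale0r addr0 scale1r. Qed.

Lemma mix_mixl om w a b : mix om (mix w a b) b = mix (om * w) a b.
Proof.
rewrite /mix scalerDr !scalerA -addrA -scalerDl; congr (_ + _ *: _); ring.
Qed.

Lemma mix_scale_add om k a1 a2 b1 b2 :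
  mix om (k *: (a1 + a2)) (k *: (b1 + b2)) = k *: (mix om a1 b1 + mix om a2 b2).
Proof.
rewrite /mix !scalerA ![om * k]mulrC ![(1 - om) * k]mulrC -!scalerA -!scalerDr.
by congr (_ *: _); rewrite !scalerDr addrACA.
Qed.

Variables (m : nat) (w : R) (F : R -> nat -> nat -> V).
Hypothesis F_step : forall om j i, (j < m)%N -> (2 ^ j.+1 %| i)%N -> (i < 2 ^ m)%N ->
  F om j.+1 i = 2^-1 *: (F (om * w) j i + F (om * w) j (i + 2 ^ j)%N).

Lemma compounded_dyadic_average j om i : (j <= m)%N -> (2 ^ j %| i)%N -> (i < 2 ^ m)%N ->
  F om j i = (2 ^ j)%:R^-1 *: \sum_(i <= k < i + 2 ^ j) F (om * w ^+ j) 0 k.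
Proof.
elim: j om i => [|j IH] om i lt_jm dvd_i lt_i.
  by rewrite expn0 invr1 scale1r addn1 big_nat1 mulr1.
have dvd_j : (2 ^ j %| i)%N := dvdn_trans (dvdn_exp2l 2 (leqnSn j)) dvd_i.
have le_next : (i + 2 ^ j.+1 <= 2 ^ m)%N.
  by apply: leq_add_dvdn => //; apply: dvdn_exp2l.
have lt_half : (i + 2 ^ j < 2 ^ m)%N.
  by apply: leq_trans le_next; rewrite ltn_add2l ltn_exp2l.
have dvd_half : (2 ^ j %| i + 2 ^ j)%N by rewrite dvdn_add.
have le_jm : (j <= m)%N := ltnW lt_jm.
rewrite F_step // (IH _ i) // (IH _ (i + 2 ^ j)%N) //.
by rewrite -mulrA -exprS big_nat_split_pow2 -scalerDr scalerA -invfM -natrM -expnS.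
Qed.

End Mixtures.

Theorem proposition1 (R : realType) (n : nat) (hn : (1 <= n)%N)
  (Cond : Type) (c : Cond) (m : nat) (hm : (1 <= m)%N)
  (s : 'rV[R]_n -> R -> option Cond -> R -> 'rV[R]_n)
  (w : R) (y : nat -> 'rV[R]_n) :
  let N := (2 ^ m)%N in
  let d := (N%:R)^-1 : R in
  (forall j i : nat, (j < m)%N -> (i < N)%N -> (2 ^ j.+1 %| i)%N ->
     s (y i) (i%:R / N%:R) (Some c) ((2 ^ j.+1)%:R * d)
     = 2^-1 *: (guided s w (y i) (i%:R / N%:R) c ((2 ^ j)%:R * d)
               + guided s w (y (i + 2 ^ j)%N) ((i + 2 ^ j)%:R / N%:R) c
                   ((2 ^ j)%:R * d))) ->
  (forall j i : nat, (j < m)%N -> (i < N)%N -> (2 ^ j.+1 %| i)%N ->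
     s (y i) (i%:R / N%:R) None ((2 ^ j.+1)%:R * d)
     = 2^-1 *: (s (y i) (i%:R / N%:R) None ((2 ^ j)%:R * d)
               + s (y (i + 2 ^ j)%N) ((i + 2 ^ j)%:R / N%:R) None
                   ((2 ^ j)%:R * d))) ->
  s (y 0%N) 0 (Some c) (N%:R * d)
  = N%:R^-1 *: \sum_(i < N) guided s (w ^+ m) (y i) (i%:R / N%:R) c d.
Proof.
move=> N d cond_step null_step.
pose out (z : option Cond) j i := s (y i) (i%:R / N%:R) z ((2 ^ j)%:R * d).
pose F om j i := mix om (out (Some c) j i) (out None j i).
have F_step om j i : (j < m)%N -> (2 ^ j.+1 %| i)%N -> (i < N)%N ->
    F om j.+1 i = 2^-1 *: (F (om * w) j i + F (om * w) j (i + 2 ^ j)%N).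
  move=> lt_jm dvd_i lt_iN.
  by rewrite /F /out cond_step // null_step // mix_scale_add !mix_mixl.
have := compounded_dyadic_average F_step 1 (leqnn m) (dvdn0 _) (expn_gt0 2 m).
rewrite /F /out mix1 mul0r mul1r add0n big_mkord => ->.
by under eq_bigr do rewrite expn0 mul1r.
Qed.
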